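(* Let $Q$ be a polyhedral partially ordered abelian group and let $M$ be a downset-finite $Q$-module. Then $M$ admits a primary decomposition, i.e., there exist finitely many submodules $M_1,\dots,M_r\subseteq M$ such that each quotient $M/M_i$ is coprimary and the natural map $M\to\bigoplus_{i=1}^r M/M_i$ is injective.
   Context: A partially ordered abelian group is an abelian group $Q$ generated by a submonoid $Q_+$ (the positive cone) whose only unit is $0$; the order is $q\preceq q'$ iff $q'-q\in Q_+$. A face of $Q$ (or of $Q_+$) is a submonoid $\sigma\subseteq Q_+$ such that $Q_+\setminus\sigma$ is an ideal of the monoid $Q_+$ (i.e. $(Q_+\setminus\sigma)+Q_+\subseteq Q_+\setminus\sigma$). $Q$ is polyhedral if $Q_+$ has only finitely many faces. A $Q$-module is a $Q$-graded vector space $M=\bigoplus_{q\in Q}M_q$ over a field $k$ with linear maps $M_q\to M_{q'}$ for $q\preceq q'$, compatible with composition (identity for $q=q'$); equivalently a $Q$-graded module over the monoid algebra $k[Q_+]$. Homomorphisms are degree-preserving linear maps commuting with these structure maps. A downset $D\subseteq Q$ is a subset with $D-Q_+=D$; the downset module $k[D]$ has $k$ in each degree $q\in D$, $0$ elsewhere, identity structure maps between degrees in $D$ (it is a quotient of $k[Q]$). A downset hull of $M$ is an injection $M\hookrightarrow\bigoplus_{j\in J}E_j$ with each $E_j$ a downset module; $M$ is downset-finite if it admits such a hull with $J$ finite. For a face $\tau$, $\mathbb Z\tau$ is the subgroup generated by $\tau$, and the localization of $M$ along $\tau$ is $M_\tau=M\otimes_{k[Q_+]}k[Q_++\mathbb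 Z\tau]$, with natural map $M\to M_\tau$. The submodule of $M$ globally supported on $\tau$ is $\Gamma_\tau M=\bigcap_{\tau'\not\subseteq\tau}\ker(M\to M_{\tau'})$, the intersection over faces $\tau'$ not contained in $\tau$. A module $M$ (over polyhedral $Q$) is coprimary (more precisely $\tau$-coprimary) if for some face $\tau$ the map $M\to M_\tau$ is injective and $\Gamma_\tau(M_\tau)$ is an essential submodule of $M_\tau$ (every nonzero submodule of $M_\tau$ meets it nontrivially). *)

From HB Require Import structures.
From mathcomp Require Import all_boot all_algebra.
From mathcomp Require Import boolp classical_sets cardinality.
Set Implicit Arguments. Unset Strict Implicit. Unset Printing Implicit Defensive.
Import GRing.Theory.
Local Open Scope classical_set_scope.
Local Open Scope ring_scope.

(** Q-modules as data: a family of k-vector spaces indexed by Q together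
    with (total) structure maps; only the maps qmap q q' with q <= q' are
    meaningful, and all axioms/definitions below only ever use those. *)
Record qmod (Q : zmodType) (k : fieldType) := QMod {
  qcar : Q -> lmodType k ;
  qmap : forall q q' : Q, qcar q -> qcar q' }.
Arguments qcar {Q k} _ _.
Arguments qmap {Q k} _ _ _ _.

Section Defs.
Variables (Q : zmodType) (Qp : set Q) (k : fieldType).

Definition qle (q q' : Q) : Prop := Qp (q' - q).

(** Q is a partially ordered abelian group with positive cone Qp:
    Qp is a submonoid, its only unit is 0, and it generates Q as a group
    (the subgroup generated by a submonoid is the set of differences). *)
Definition is_poag : Prop :=
  [/\ Qp 0, (forall a b, Qp a -> Qp b -> Qp (a + b)),
      (forall a, Qp a -> Qp (- a) -> a = 0) &
      (forall q, exists a b, [/\ Qp a, Qp b & q = a - b])].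

Definition is_face (s : set Q) : Prop :=
  [/\ s `<=` Qp, s 0, (forall a b, s a -> s b -> s (a + b)) &
      (forall a b, Qp a -> ~ s a -> Qp b -> ~ s (a + b))].

Definition polyhedral : Prop := finite_set [set s : set Q | is_face s].

Definition is_qmod (M : qmod Q k) : Prop :=
  [/\ (forall q q', qle q q' -> forall a (x y : qcar M q),
          qmap M q q' (a *: x + y) = a *: qmap M q q' x + qmap M q q' y),
      (forall q (x : qcar M q), qmap M q q x = x) &
      (forall q q' q'', qle q q' -> qle q' q'' -> forall x : qcar M q,
          qmap M q' q'' (qmap M q q' x) = qmap M q q'' x)].

Definition qhom (M N : qmod Q k) := forall q, qcar M q -> qcar N q.

Definition is_qhom (M N : qmod Q k) (f : qhom M N) : Prop :=
  (forall q a (x y : qcar M q), f q (a *: x + y) = a *: f q x + f q y) /\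
  (forall q q', qle q q' -> forall x : qcar M q,
      f q' (qmap M q q' x) = qmap N q q' (f q x)).

Definition qsub (M : qmod Q k) := forall q, set (qcar M q).

Definition is_qsub (M : qmod Q k) (S : qsub M) : Prop :=
  [/\ (forall q, S q 0),
      (forall q a (x y : qcar M q), S q x -> S q y -> S q (a *: x + y)) &
      (forall q q' (x : qcar M q), qle q q' -> S q x -> S q' (qmap M q q' x))].

Definition essential (M : qmod Q k) (S : qsub M) : Prop :=
  forall N : qsub M, is_qsub N -> (exists q (x : qcar M q), N q x /\ x <> 0) ->
    exists q (x : qcar M q), [/\ N q x, S q x & x <> 0].

Definition tau_inv (tau : set Q) (N : qmod Q k) : Prop :=
  forall f, tau f -> forall q, bijective (qmap N q (q + f)).

(** (L, i) is the localization M_tau = M (x)_{k[Q_+]} k[Q_+ + Z tau],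
    characterized (up to unique isomorphism) by its universal property:
    the universal morphism from M to a Q-module on which tau acts invertibly. *)
Definition is_loc (tau : set Q) (M L : qmod Q k) (i : qhom M L) : Prop :=
  [/\ is_qmod L, tau_inv tau L, is_qhom i &
    forall (N : qmod Q k) (phi : qhom M N), is_qmod N -> tau_inv tau N -> is_qhom phi ->
      (exists psi : qhom L N, is_qhom psi /\ forall q x, psi q (i q x) = phi q x) /\
      (forall psi psi' : qhom L N, is_qhom psi -> is_qhom psi' ->
         (forall q x, psi q (i q x) = phi q x) ->
         (forall q x, psi' q (i q x) = phi q x) ->
         forall q y, psi q y = psi' q y)].

Definition in_loc_ker (tau : set Q) (M : qmod Q k) q (x : qcar M q) : Prop :=
  exists (L : qmod Q k) (i : qhom M L), is_loc tau i /\ i q x = 0.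

Definition Gamma (tau : set Q) (M : qmod Q k) : qsub M :=
  fun q x => forall t, is_face t -> ~ (t `<=` tau) -> in_loc_ker t x.

Definition coprimary (M : qmod Q k) : Prop :=
  exists tau, is_face tau /\
    exists (L : qmod Q k) (i : qhom M L),
      [/\ is_loc tau i, (forall q, injective (i q)) & essential (@Gamma tau L)].

Definition is_quotient (M : qmod Q k) (S : qsub M) (P : qmod Q k) (p : qhom M P) : Prop :=
  [/\ is_qmod P, is_qhom p,
      (forall q (y : qcar P q), exists x, p q x = y) &
      (forall q (x : qcar M q), p q x = 0 <-> S q x)].

(** downsets and downset modules k[D]: k in degrees of D, 0 elsewhere,
    identity maps inside D (realized as 1x1 resp. 1x0 row vectors) *)
Definition is_downset (D : set Q) : Prop :=
  forall d a, D d -> Qp a -> D (d - a).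

Definition kD (D : set Q) : qmod Q k :=
  @QMod Q k (fun q => ('rV[k]_(asbool (D q)) : lmodType k))
        (fun q q' x => x *m const_mx 1).

(** M admits a finite downset hull M -> E_1 (+) ... (+) E_n: a finite family
    of homomorphisms to downset modules that is jointly injective *)
Definition downset_finite (M : qmod Q k) : Prop :=
  exists n (D : 'I_n -> set Q) (phi : forall j, qhom M (kD (D j))),
    [/\ (forall j, is_downset (D j)), (forall j, is_qhom (phi j)) &
        (forall q (x : qcar M q), (forall j, phi j q x = 0) -> x = 0)].

End Defs.

From HB Require Import structures.
From mathcomp Require Import all_boot all_algebra.
From mathcomp Require Import boolp classical_sets cardinality.
Set Implicit Arguments. Unset Strict Implicit. Unset Printing Implicit Defensive.
Import GRing.Theory.
Local Open Scope classical_set_scope.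
Local Open Scope ring_scope.

(* Fix a downset hull M -> k[D_1] (+) ... (+) k[D_n].  Call p in D stable if
   every face t with p + t in D keeps this property at all p' >= p in D; since
   there are finitely many faces, every point of D lies below a stable one, and
   the faces persisting at a stable p have a largest element tau_p.  For each j
   and face tau, the degrees of the support of the image of M in k[D_j] lying
   below a stable p with tau_p = tau form a convex set I, and M maps onto k[I].
   The localization of k[I] along tau is again of the form k[L], and each degree
   of L lies below a stable point, from which no face outside tau persists: so
   Gamma_tau is essential and k[I] is tau-coprimary.  The kernels of the maps
   M -> k[I] meet in 0 because every degree of D_j lies below a stable point. *)

Section BoolRowVectors.
Variable k : fieldType.

Lemma row_asboolF (P : Prop) (y : 'rV[k]_(asbool P)) : ~ P -> y = 0.
Proof. by move=> nP; move: y; rewrite asboolF // => y; exact: thinmx0. Qed.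

Lemma mulmx_const1_id (b : bool) (x : 'rV[k]_b) : x *m (const_mx 1 : 'M_(b, b)) = x.
Proof.
case: b x => x; last by rewrite (thinmx0 x) mul0mx.
by apply/matrixP => i j; rewrite !mxE big_ord1 !mxE mulr1 (ord1 i) (ord1 j).
Qed.

Lemma mulmx_const1A (b1 b2 b3 : bool) (x : 'rV[k]_b1) : (b1 -> b3 -> b2) ->
  x *m (const_mx 1 : 'M_(b1, b2)) *m (const_mx 1 : 'M_(b2, b3)) = x *m const_mx 1.
Proof.
case: b1 x => x; last by rewrite (thinmx0 x) !mul0mx.
case: b3 => H; last by rewrite (thinmx0 (_ *m _)) (thinmx0 (x *m _)).
have -> : b2 = true by exact: H.
apply/matrixP => i j; rewrite !mxE big_ord1 !mxE big_ord1 !mxE big_ord1 !mxE.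
by rewrite !mulr1.
Qed.

Lemma mulmx_const1_inj (b1 b2 : bool) : (b1 -> b2) ->
  injective (fun x : 'rV[k]_b1 => x *m (const_mx 1 : 'M_(b1, b2))).
Proof.
move=> b12 x y /= Exy.
have back (z : 'rV[k]_b1) : z *m (const_mx 1 : 'M_(b1, b2)) *m (const_mx 1 : 'M_(b2, b1)) = z.
  by rewrite mulmx_const1A ?mulmx_const1_id // => b _; exact: b12.
by rewrite -(back x) Exy back.
Qed.

Lemma mulmx_const1_eq0 (b1 b2 : bool) (x : 'rV[k]_b1) : (b1 -> b2) ->
  x *m (const_mx 1 : 'M_(b1, b2)) = 0 -> x = 0.
Proof. by move=> b12 x0; apply: (mulmx_const1_inj b12); rewrite /= x0 mul0mx. Qed.

Lemma row_bool_multiple (b : bool) (w y : 'rV[k]_b) : w != 0 -> exists a, y = a *: w.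
Proof.
case: b w y => w y nw; last by exists 0; rewrite (thinmx0 y) scale0r.
have w0 : w 0 0 != 0.
  apply: contra nw => /eqP E; apply/eqP/matrixP => i j.
  by rewrite (ord1 i) (ord1 j) E mxE.
exists (y 0 0 / w 0 0); apply/matrixP => i j; rewrite (ord1 i) (ord1 j) mxE.
by rewrite divfK.
Qed.

End BoolRowVectors.

Lemma scale_add_linear (k : fieldType) (V W : lmodType k) (f : V -> W) :
  (forall a x y, f (a *: x + y) = a *: f x + f y) ->
  f 0 = 0 /\ forall a x, f (a *: x) = a *: f x.
Proof.
move=> fZD; have f0 : f 0 = 0.
  by have := fZD (-1) 0 0; rewrite scaler0 addr0 scaleN1r addNr.
by split=> // a x; have := fZD a x 0; rewrite !addr0 f0 addr0.
Qed.

Section PartialOrder.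
Variables (Q : zmodType) (Qp : set Q).

Lemma face_Qp t : is_face Qp t -> forall a, t a -> Qp a. Proof. by case. Qed.
Lemma face0 t : is_face Qp t -> t 0. Proof. by case. Qed.
Lemma faceD t : is_face Qp t -> forall a b, t a -> t b -> t (a + b). Proof. by case. Qed.

Lemma downset_le D q p : is_downset Qp D -> qle Qp q p -> D p -> D q.
Proof. by move=> dD le_qp Dp; have := dD p (p - q) Dp le_qp; rewrite subKr. Qed.

Lemma qleD2r a b f : qle Qp a b -> qle Qp (a + f) (b + f).
Proof. by rewrite /qle opprD addrACA subrr addr0. Qed.

Lemma qle_addr a f : Qp f -> qle Qp a (a + f).
Proof. by rewrite /qle [a + f]addrC addrK. Qed.

Hypothesis poag : is_poag Qp.

Lemma Qp0 : Qp 0. Proof. by case: poag. Qed.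
Lemma QpD a b : Qp a -> Qp b -> Qp (a + b). Proof. by case: poag => _ H _ _; apply: H. Qed.

Lemma qle_refl q : qle Qp q q. Proof. by rewrite /qle subrr; exact: Qp0. Qed.

Lemma qle_trans a b c : qle Qp a b -> qle Qp b c -> qle Qp a c.
Proof. by rewrite /qle => ab bc; rewrite -(subrKA b); exact: QpD. Qed.

Lemma is_face0 : is_face Qp [set 0].
Proof.
split=> //.
- by move=> a ->; exact: Qp0.
- by move=> a b -> ->; rewrite addr0.
- move=> a b Qa /= na Qb ab0; apply: na; case: poag => _ _ antisym _.
  by apply: antisym => //; rewrite -[- a]addr0 -ab0 addKr.
Qed.

Definition face_join t1 t2 : set Q :=
  fun x => Qp x /\ exists c u v, [/\ Qp c, t1 u, t2 v & x + c = u + v].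

Lemma face_join_add t1 t2 a b : is_face Qp t1 -> is_face Qp t2 -> t1 a -> t2 b ->
  face_join t1 t2 (a + b).
Proof.
move=> f1 f2 a1 b2; split; first exact: QpD (face_Qp f1 a1) (face_Qp f2 b2).
by exists 0, a, b; rewrite addr0; split => //; exact: Qp0.
Qed.

Lemma face_join_is_face t1 t2 : is_face Qp t1 -> is_face Qp t2 ->
  is_face Qp (face_join t1 t2).
Proof.
move=> f1 f2; split.
- by move=> x [].
- by rewrite -[0]addr0; apply: face_join_add => //; exact: face0.
- move=> x y [Qx [c [u [v [Qc t1u t2v xc]]]]] [Qy [c' [u' [v' [Qc' t1u' t2v' yc']]]]].
  split; first exact: QpD.
  exists (c + c'), (u + u'), (v + v'); split.
  + exact: QpD.
  + exact: faceD f1 _ _ t1u t1u'.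
  + exact: faceD f2 _ _ t2v t2v'.
  + by rewrite addrACA xc yc' addrACA.
- move=> x y Qx nx Qy [_ [c [u [v [Qc t1u t2v xyc]]]]]; apply: nx.
  split => //; exists (y + c), u, v; split => //; first exact: QpD.
  by rewrite addrA.
Qed.

End PartialOrder.

Section QModules.
Variables (Q : zmodType) (Qp : set Q) (k : fieldType) (M N : qmod Q k).

Section StructureMaps.
Hypothesis qM : is_qmod Qp M.

Lemma qmap_lin q q' : qle Qp q q' -> forall a x y,
  qmap M q q' (a *: x + y) = a *: qmap M q q' x + qmap M q q' y.
Proof. by case: qM => H _ _; apply: H. Qed.

Lemma qmap0 q q' : qle Qp q q' -> qmap M q q' 0 = 0.
Proof. by move=> le_qq'; case: (scale_add_linear (qmap_lin le_qq')). Qed.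

Lemma qmap_comp q q' q'' : qle Qp q q' -> qle Qp q' q'' -> forall x,
  qmap M q' q'' (qmap M q q' x) = qmap M q q'' x.
Proof. by case: qM => _ _ H; apply: H. Qed.

End StructureMaps.

Section Homomorphisms.
Unset Implicit Arguments.
Variable f : qhom M N.
Set Implicit Arguments.
Hypothesis hf : is_qhom Qp f.

Lemma qhom_lin q a (x y : qcar M q) : f q (a *: x + y) = a *: f q x + f q y.
Proof. by case: hf. Qed.

Lemma qhom0 q : f q 0 = 0.
Proof. by case: (scale_add_linear (@qhom_lin q)). Qed.

Lemma qhomZ q a (x : qcar M q) : f q (a *: x) = a *: f q x.
Proof. by case: (scale_add_linear (@qhom_lin q)). Qed.

Lemma qhom_qmap q q' (x : qcar M q) :
  qle Qp q q' -> f q' (qmap M q q' x) = qmap N q q' (f q x).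
Proof. by case: hf => _ H /H; apply. Qed.

End Homomorphisms.

End QModules.

Definition convex (Q : zmodType) (Qp J : set Q) :=
  forall q q' q'', qle Qp q q' -> qle Qp q' q'' -> J q -> J q'' -> J q'.

Lemma kD_is_qmod (Q : zmodType) (Qp : set Q) (k : fieldType) (J : set Q) :
  convex Qp J -> is_qmod Qp (kD k J).
Proof.
move=> cJ; split => /=.
- by move=> q q' _ a x y; rewrite mulmxDl scalemxAl.
- by move=> q x; rewrite mulmx_const1_id.
- move=> q q' q'' le_qq' le_q'q'' x; rewrite mulmx_const1A // => /asboolP Jq /asboolP Jq''.
  by apply/asboolP; exact: cJ Jq Jq''.
Qed.

Definition loc_supp (Q : zmodType) (J t : set Q) : set Q :=
  fun q => exists f, t f /\ forall g, t g -> J (q + (f + g)).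

Definition loc_incl (Q : zmodType) (k : fieldType) (J t : set Q) :
  qhom (kD k J) (kD k (loc_supp J t)) := fun q x => x *m const_mx 1.
Arguments loc_incl {Q} k J t q x.

Section LocSupport.
Variables (Q : zmodType) (Qp : set Q) (k : fieldType) (J t : set Q).
Hypothesis ft : is_face Qp t.

Lemma loc_supp_convex : convex Qp J -> convex Qp (loc_supp J t).
Proof.
move=> cJ q q' q'' le_qq' le_q'q'' [f [tf Jf]] [f'' [tf'' Jf'']].
exists (f + f''); split; first exact: (faceD ft).
move=> g tg; apply: (cJ (q + (f + f'' + g)) _ (q'' + (f + f'' + g))).
- exact: qleD2r.
- exact: qleD2r.
- by rewrite -[f + f'' + g]addrA; apply: Jf; exact: (faceD ft).
- by rewrite [f + f'']addrC -[f'' + f + g]addrA; apply: Jf''; exact: (faceD ft).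
Qed.

Lemma loc_suppD q h : t h -> loc_supp J t (q + h) <-> loc_supp J t q.
Proof.
move=> th; split=> -[f [tf Jf]].
- exists (h + f); split; first exact: (faceD ft).
  by move=> g tg; rewrite -[h + f + g]addrA (addrA q); apply: Jf.
- exists f; split => // g tg.
  by rewrite -addrA (addrCA h); apply: Jf; exact: (faceD ft).
Qed.

Lemma sub_loc_supp : (forall q f, J q -> t f -> J (q + f)) -> J `<=` loc_supp J t.
Proof.
move=> JD q Jq; exists 0; split; first exact: (face0 ft).
by move=> g tg; rewrite add0r; apply: JD.
Qed.

Lemma loc_incl_qhom : is_poag Qp -> convex Qp J ->
  is_qhom Qp (loc_incl k J t).
Proof.
move=> poag cJ; split => /=.
  by move=> q a x y; rewrite /loc_incl mulmxDl scalemxAl.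
move=> q q' le_qq' x; rewrite /loc_incl /= !mulmx_const1A //.
- move=> /asboolP Jq /asboolP [f [tf Jf]]; apply/asboolP.
  exists f; split => // g tg; apply: (cJ q _ (q' + (f + g))) => //.
  + apply: qle_addr; apply: QpD => //; exact: (face_Qp ft).
  + exact: qleD2r.
  + exact: Jf.
- move=> /asboolP Jq /asboolP [f [tf Jf]]; apply/asboolP.
  apply: (cJ q _ (q' + (f + 0))) => //.
  + by rewrite addr0; apply: qle_addr; exact: (face_Qp ft).
  + by apply: Jf; exact: (face0 ft).
Qed.

End LocSupport.

Section LocUniversal.
Variables (Q : zmodType) (Qp : set Q) (k : fieldType).
Hypothesis poag : is_poag Qp.
Unset Implicit Arguments.
Variables (J t : set Q) (N : qmod Q k) (phi : qhom (kD k J) N).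
Set Implicit Arguments.
Hypotheses (ft : is_face Qp t) (qN : is_qmod Qp N) (iN : tau_inv t N)
  (hphi : is_qhom Qp phi).

Definition loc_shift q : Q :=
  xget 0 [set f | t f /\ forall g, t g -> J (q + (f + g))].

Lemma loc_shift_face q : t (loc_shift q).
Proof. by rewrite /loc_shift; case: xgetP => [f _ []|_]; last exact: face0 ft. Qed.

Lemma loc_shift_supp q : loc_supp J t q -> forall g, t g -> J (q + (loc_shift q + g)).
Proof.
by move=> /(xgetPex 0 (P := [set f | t f /\ forall g, t g -> J (q + (f + g))])) [].
Qed.

Lemma le_loc_shift q : qle Qp q (q + loc_shift q).
Proof. exact: qle_addr (face_Qp ft (loc_shift_face q)). Qed.

Lemma qmap_face_inj q f : t f -> injective (qmap N q (q + f)).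
Proof. by move=> tf; apply: bij_inj; apply: iN. Qed.

(* In degree q, move up by an f in t for which y makes sense in k[J] and pull
   back along the invertible action of f on N. *)
Definition loc_lift : qhom (kD k (loc_supp J t)) N := fun q y =>
  xget 0 [set z | qmap N q (q + loc_shift q) z =
     phi (q + loc_shift q) (y *m const_mx 1 : qcar (kD k J) (q + loc_shift q))].
Arguments loc_lift : clear implicits.

Lemma loc_liftE q y : qmap N q (q + loc_shift q) (loc_lift q y) =
  phi (q + loc_shift q) (y *m const_mx 1 : qcar (kD k J) (q + loc_shift q)).
Proof.
rewrite /loc_lift; set w := phi _ _.
have [g _ K] := iN (loc_shift_face q) q.
by apply: (xgetPex 0 (P := fun z => qmap N q (q + loc_shift q) z = w)); exists (g w).
Qed.

Lemma loc_lift_lin q a y y' :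
  loc_lift q (a *: y + y') = a *: loc_lift q y + loc_lift q y'.
Proof.
apply: (qmap_face_inj (loc_shift_face q)).
by rewrite (qmap_lin qN (le_loc_shift _)) !loc_liftE mulmxDl -scalemxAl (qhom_lin hphi).
Qed.

Lemma loc_lift0 q : loc_lift q 0 = 0.
Proof. by case: (scale_add_linear (@loc_lift_lin q)). Qed.

Lemma loc_lift_in q r y : qle Qp q r -> (forall g, t g -> J (r + g)) ->
  qmap N q r (loc_lift q y) = phi r (y *m const_mx 1 : qcar (kD k J) r).
Proof.
move=> le_qr Jr; have [Lq|Lq] := pselect (loc_supp J t q); last first.
  by rewrite (row_asboolF y Lq) loc_lift0 (qmap0 qN) // mul0mx (qhom0 hphi).
set f := loc_shift q; have tf : t f by apply: loc_shift_face.
have Qf := face_Qp ft tf.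
apply: (qmap_face_inj (q := r) tf).
rewrite (qmap_comp qN) //; last exact: qle_addr.
rewrite -(qmap_comp qN (le_loc_shift _) (qleD2r f le_qr)) loc_liftE.
rewrite -(qhom_qmap hphi _ (qleD2r f le_qr)) -(qhom_qmap hphi _ (qle_addr r Qf)).
rewrite /= !mulmx_const1A // => _ _; apply/asboolP.
- by have := Jr 0 (face0 ft); rewrite addr0.
- by have := loc_shift_supp Lq (face0 ft); rewrite addr0.
Qed.

Lemma loc_lift_out q r y : qle Qp q r -> ~ loc_supp J t r ->
  qmap N q r (loc_lift q y) = 0.
Proof.
move=> le_qr Lr; have [Lq|Lq] := pselect (loc_supp J t q); last first.
  by rewrite (row_asboolF y Lq) loc_lift0 (qmap0 qN).
set f := loc_shift q; have tf : t f by apply: loc_shift_face.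
have [g [tg Jg]] : exists g, t g /\ ~ J (r + (f + g)).
  apply: contra_notP Lr => H; exists f; split => // g tg.
  by apply: contra_notP H => H; exists g.
have tfg : t (f + g) by exact: (faceD ft).
have Qfg := face_Qp ft tfg.
have le_fg : qle Qp (q + f) (r + (f + g)).
  by apply: (qle_trans poag (qleD2r f le_qr)); rewrite addrA; exact: qle_addr (face_Qp ft tg).
apply: (qmap_face_inj (q := r) tfg); rewrite (qmap0 qN); last exact: qle_addr.
rewrite (qmap_comp qN) //; last exact: qle_addr.
rewrite -(qmap_comp qN (le_loc_shift _) le_fg) loc_liftE -(qhom_qmap hphi) //.
by rewrite [X in phi _ X](row_asboolF _ Jg) (qhom0 hphi).
Qed.

Lemma loc_lift_qhom : is_qhom Qp loc_lift.
Proof.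
split; first by move=> q a x y; apply: loc_lift_lin.
move=> q q' le_qq' y; have [Lq'|Lq'] := pselect (loc_supp J t q'); last first.
  by rewrite (loc_lift_out _ le_qq' Lq') [X in loc_lift _ X](row_asboolF _ Lq') loc_lift0.
set f := loc_shift q'; have tf : t f by apply: loc_shift_face.
apply: (qmap_face_inj (q := q') tf).
rewrite loc_liftE (qmap_comp qN) //; last exact: le_loc_shift.
rewrite loc_lift_in //.
- by rewrite /= mulmx_const1A // => _ _; apply/asboolP.
- exact: (qle_trans poag le_qq' (le_loc_shift _)).
- by move=> g tg; rewrite -addrA; apply: loc_shift_supp.
Qed.

Lemma loc_lift_incl q x : loc_lift q (loc_incl k J t q x) = phi q x.
Proof.
rewrite /loc_incl; have [Jq|Jq] := pselect (J q); last first.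
  by rewrite (row_asboolF x Jq) mul0mx loc_lift0 (qhom0 hphi).
have [Lq|Lq] := pselect (loc_supp J t q); last first.
  rewrite [X in loc_lift _ X](row_asboolF _ Lq) loc_lift0.
  have [g [tg Jg]] : exists g, t g /\ ~ J (q + g).
    apply: contra_notP Lq => H; exists 0; split; first exact: (face0 ft).
    by move=> g tg; rewrite add0r; apply: contra_notP H => H; exists g.
  have le_qg : qle Qp q (q + g) by exact: qle_addr (face_Qp ft tg).
  apply: (qmap_face_inj (q := q) tg); rewrite (qmap0 qN) // -(qhom_qmap hphi) //.
  by rewrite [X in phi _ X](row_asboolF _ Jg) (qhom0 hphi).
apply: (qmap_face_inj (loc_shift_face q)).
rewrite loc_liftE -(qhom_qmap hphi _ (le_loc_shift _)).
by rewrite /= mulmx_const1A // => _ _; apply/asboolP.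
Qed.

Lemma loc_lift_unique (p1 p2 : qhom (kD k (loc_supp J t)) N) :
  is_qhom Qp p1 -> is_qhom Qp p2 ->
  (forall q x, p1 q (loc_incl k J t q x) = phi q x) ->
  (forall q x, p2 q (loc_incl k J t q x) = phi q x) ->
  forall q y, p1 q y = p2 q y.
Proof.
move=> h1 h2 e1 e2 q y; have [Lq|Lq] := pselect (loc_supp J t q); last first.
  by rewrite (row_asboolF y Lq) (qhom0 h1) (qhom0 h2).
set f := loc_shift q.
apply: (qmap_face_inj (loc_shift_face q)).
rewrite -(qhom_qmap h1 _ (le_loc_shift _)) -(qhom_qmap h2 _ (le_loc_shift _)).
have -> : qmap (kD k (loc_supp J t)) q (q + f) y =
    loc_incl k J t (q + f) (y *m const_mx 1 : qcar (kD k J) (q + f)).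
  rewrite /loc_incl /= mulmx_const1A // => _ _; apply/asboolP.
  by have := loc_shift_supp Lq (face0 ft); rewrite addr0.
by rewrite e1 e2.
Qed.

End LocUniversal.

Lemma kD_is_loc (Q : zmodType) (Qp : set Q) (k : fieldType) (J t : set Q) :
  is_poag Qp -> convex Qp J -> is_face Qp t -> is_loc Qp t (loc_incl k J t).
Proof.
move=> poag cJ ft; split.
- exact/kD_is_qmod/loc_supp_convex.
- move=> f tf q /=.
  have e : `[< loc_supp J t q >] = `[< loc_supp J t (q + f) >].
    by apply: asbool_equiv_eq; apply: iff_sym; exact: (loc_suppD J ft q tf).
  exists (fun y : 'rV[k]_(`[< loc_supp J t (q + f) >]) =>
            y *m (const_mx 1 : 'M_(_, `[< loc_supp J t q >]))).
  + by move=> x; rewrite mulmx_const1A ?mulmx_const1_id // e.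
  + by move=> x; rewrite mulmx_const1A ?mulmx_const1_id // e.
- exact: loc_incl_qhom ft poag cJ.
- move=> N phi qN iN hphi; split.
  + exists (loc_lift phi); split; first exact: (loc_lift_qhom poag ft qN iN hphi).
    exact: (loc_lift_incl ft qN iN hphi).
  + exact: (loc_lift_unique ft iN).
Qed.

(* For convex L, Gamma_tau k[L] = k[gamma_supp Qp L tau], because the
   localization of k[L] along t is k[loc_supp L t]. *)
Definition gamma_supp (Q : zmodType) (Qp L tau : set Q) : set Q :=
  fun q => L q /\ forall t, is_face Qp t -> ~ t `<=` tau -> ~ loc_supp L t q.

Lemma kD_coprimary (Q : zmodType) (Qp : set Q) (k : fieldType) (I tau : set Q) :
  is_poag Qp -> convex Qp I -> is_face Qp tau ->
  (forall q f, I q -> tau f -> I (q + f)) ->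
  (forall q, loc_supp I tau q ->
     exists2 q', qle Qp q q' & gamma_supp Qp (loc_supp I tau) tau q') ->
  coprimary Qp (kD k I).
Proof.
move=> poag cI ftau ID below_gamma.
have cL : convex Qp (loc_supp I tau) by exact: loc_supp_convex.
exists tau; split => //; exists (kD k (loc_supp I tau)), (loc_incl k I tau); split.
- exact: kD_is_loc.
- move=> q; apply: mulmx_const1_inj => /asboolP Iq; apply/asboolP.
  exact: (sub_loc_supp ftau ID).
move=> S [_ _ Sup] [q [x [Sx x0]]].
have Lq : loc_supp I tau q by apply: contra_notP x0 => Lq; exact: row_asboolF.
have [q' le_qq' [Lq' notloc]] := below_gamma q Lq.
exists q', (qmap (kD k (loc_supp I tau)) q q' x); split; first exact: Sup.
- move=> t ft tsub; exists (kD k (loc_supp (loc_supp I tau) t)).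
  exists (loc_incl k (loc_supp I tau) t); split; first exact: kD_is_loc.
  exact: row_asboolF (notloc t ft tsub).
- move=> /mulmx_const1_eq0 x'0; apply: x0; apply: x'0 => _; exact/asboolP.
Qed.

Lemma sub_count_ltn (T : eqType) (a b : pred T) (s : seq T) x :
  subpred a b -> x \in s -> b x -> ~~ a x -> (count a s < count b s)%N.
Proof.
move=> ab; elim: s => // y s IH; rewrite inE => /orP [/eqP <-|xs] bx ax /=.
  by rewrite bx (negbTE ax) add0n add1n ltnS; exact: sub_count.
have := IH xs bx ax; case ay: (a y); first by rewrite (ab _ ay) !add1n ltnS.
by rewrite add0n => H; apply: (leq_trans H); apply: leq_addl.
Qed.

Section Persistence.
Variables (Q : zmodType) (Qp : set Q).
Hypothesis poag : is_poag Qp.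
Variable D : set Q.
Hypothesis dD : is_downset Qp D.

Definition persists p (t : set Q) := forall a, t a -> D (p + a).

Definition stable p := forall p', qle Qp p p' -> D p' ->
  forall t, is_face Qp t -> persists p t -> persists p' t.

Definition stable_with tau p := [/\ D p, stable p, persists p tau &
  forall t, is_face Qp t -> persists p t -> t `<=` tau].

Definition below_stable tau q := exists2 p, stable_with tau p & qle Qp q p.

Lemma persists_le p p' t : qle Qp p p' -> persists p' t -> persists p t.
Proof. by move=> le_pp' Dp' a ta; apply: (downset_le dD (qleD2r a le_pp')); exact: Dp'. Qed.

Lemma stable_withD tau p f : is_face Qp tau -> stable_with tau p -> tau f ->
  stable_with tau (p + f).
Proof.
move=> ftau [Dp sp Pp maxp] tf.
have le_pf := qle_addr p (face_Qp ftau tf).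
split.
- exact: Pp.
- move=> p' le_pfp' Dp' t ft Ppf; apply: (sp p' (qle_trans poag le_pf le_pfp') Dp' t ft).
  exact: persists_le Ppf.
- exact: (sp _ le_pf (Pp f tf) tau ftau Pp).
- by move=> t ft Ppf; apply: maxp => //; exact: persists_le Ppf.
Qed.

Lemma below_stable_D tau q : below_stable tau q -> D q.
Proof. by move=> [p [Dp _ _ _] le_qp]; exact: downset_le le_qp Dp. Qed.

Lemma below_stable_le tau q q' : qle Qp q q' -> below_stable tau q' -> below_stable tau q.
Proof. by move=> le_qq' [p Sp le_q'p]; exists p => //; exact: qle_trans le_q'p. Qed.

Lemma below_stableD tau q f : is_face Qp tau -> below_stable tau q -> tau f ->
  below_stable tau (q + f).
Proof. by move=> ftau [p Sp le_qp] tf; exists (p + f); [exact: stable_withD | exact: qleD2r]. Qed.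

(* Moving up along a failure of stability strictly decreases the number of
   persisting faces, of which there are finitely many. *)
Lemma exists_stable_above (s : seq (set Q)) : [set t | is_face Qp t] = [set` s] ->
  forall q, D q -> exists p, [/\ qle Qp q p, D p & stable p].
Proof.
move=> faces_s q Dq.
pose m p := count (fun t => `[< is_face Qp t /\ persists p t >]) s.
have step p : ~ stable p -> exists p', [/\ qle Qp p p', D p' & (m p' < m p)%N].
  move=> /existsNP [p' /not_implyP [le_pp' /not_implyP [Dp' /existsNP [t]]]].
  move=> /not_implyP [ft /not_implyP [Pp nPp']].
  exists p'; split => //; apply: (sub_count_ltn (x := t)).
  - by move=> u /asboolP [fu Pu]; apply/asboolP; split => //; exact: persists_le Pu.
  - by have : [set t | is_face Qp t] t by []; rewrite faces_s.
  - exact/asboolP.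
  - by apply/negP => /asboolP [].
suff: forall n p, D p -> qle Qp q p -> (m p <= n)%N ->
    exists p', [/\ qle Qp q p', D p' & stable p'].
  by apply; [exact: Dq | exact: qle_refl | exact: leqnn].
elim=> [|n IH] p Dp le_qp.
  have [sp|/step [p' [_ _ lt]]] := pselect (stable p); first by exists p.
  by rewrite leqn0 => /eqP mp0; rewrite mp0 in lt.
have [sp|/step [p' [le_pp' Dp' lt]]] := pselect (stable p); first by exists p.
move=> mpn; apply: (IH p' Dp' (qle_trans poag le_qp le_pp')).
by rewrite -ltnS; exact: leq_trans lt mpn.
Qed.

Definition persist_face p : set Q :=
  fun a => exists t, [/\ is_face Qp t, persists p t & t a].

(* The faces persisting at a stable p are closed under joins: from p + u in D,
   with u in t1, stability carries t2 along. *)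
Lemma persist_face_is_face p : D p -> stable p -> is_face Qp (persist_face p).
Proof.
move=> Dp sp; split.
- by move=> a [t [ft _ ta]]; exact: (face_Qp ft).
- exists [set 0]; split => //; first exact: is_face0.
  by move=> a /= ->; rewrite addr0.
- move=> a b [t1 [f1 P1 a1]] [t2 [f2 P2 b2]].
  exists (face_join Qp t1 t2); split; last exact: face_join_add.
    exact: face_join_is_face.
  move=> x [Qx [c [u [v [Qc t1u t2v xc]]]]].
  have le_pu : qle Qp p (p + u) by exact: qle_addr (face_Qp f1 t1u).
  have Dpuv : D (p + u + v) by exact: (sp _ le_pu (P1 u t1u) t2 f2 P2).
  apply: (downset_le dD _ Dpuv).
  by rewrite -addrA -xc addrA; exact: qle_addr.
- move=> a b Qa na Qb [t [ft Pt tab]]; apply: na; exists t; split => //.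
  case: ft => _ _ _ ideal; apply: contrapT => nta; exact: (ideal a b Qa nta Qb tab).
Qed.

Lemma stable_with_persist_face p : D p -> stable p -> stable_with (persist_face p) p.
Proof.
move=> Dp sp; split => //.
- by move=> a [t [ft Pt ta]]; exact: Pt.
- by move=> t ft Pt a ta; exists t.
Qed.

Lemma below_stable_cover (s : seq (set Q)) : [set t | is_face Qp t] = [set` s] ->
  forall q, D q -> exists2 tau, is_face Qp tau & below_stable tau q.
Proof.
move=> faces_s q Dq; have [p [le_qp Dp sp]] := exists_stable_above faces_s Dq.
exists (persist_face p); first exact: persist_face_is_face.
by exists p => //; exact: stable_with_persist_face.
Qed.

End Persistence.

Section Pieces.
Variables (Q : zmodType) (Qp : set Q) (k : fieldType).
Hypothesis poag : is_poag Qp.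
Variables (M : qmod Q k) (D : set Q).
Unset Implicit Arguments.
Variable phi : qhom M (kD k D).
Set Implicit Arguments.
Hypotheses (dD : is_downset Qp D) (hphi : is_qhom Qp phi).

Definition image_supp q := exists x : qcar M q, phi q x <> 0.

Definition piece tau q := below_stable Qp D tau q /\ image_supp q.

Definition piece_map tau : qhom M (kD k (piece tau)) :=
  fun q x => phi q x *m const_mx 1.
Arguments piece_map : clear implicits.

Lemma image_supp_D q : image_supp q -> D q.
Proof. by move=> [x nx]; apply: contrapT => nDq; apply: nx; exact: row_asboolF. Qed.

Lemma image_supp_le q q' : qle Qp q q' -> D q' -> image_supp q -> image_supp q'.
Proof.
move=> le_qq' Dq' [x nx]; exists (qmap M q q' x); rewrite (qhom_qmap hphi _ le_qq').
move=> /mulmx_const1_eq0 x0; apply: nx; apply: x0 => _; exact/asboolP.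
Qed.

Lemma piece_D tau q : piece tau q -> D q.
Proof. by move=> [Bq _]; exact: below_stable_D Bq. Qed.

Lemma piece_convex tau : convex Qp (piece tau).
Proof.
move=> q q' q'' le_qq' le_q'q'' [_ Uq] [Bq'' _].
have Bq' := below_stable_le poag le_q'q'' Bq''.
by split => //; apply: image_supp_le Uq; last exact: below_stable_D Bq'.
Qed.

Lemma pieceD tau q f : is_face Qp tau -> piece tau q -> tau f -> piece tau (q + f).
Proof.
move=> ftau [Bq Uq] tf; have Bqf := below_stableD poag dD ftau Bq tf.
split => //; apply: image_supp_le Uq; last exact: below_stable_D Bqf.
exact: qle_addr (face_Qp ftau tf).
Qed.

Lemma loc_supp_piece_D tau q : is_face Qp tau -> loc_supp (piece tau) tau q -> D q.
Proof.
move=> ftau [f [tf Pf]]; have := piece_D (Pf 0 (face0 ftau)); rewrite addr0.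
by move=> Dqf; apply: (downset_le dD _ Dqf); exact: qle_addr (face_Qp ftau tf).
Qed.

(* A stable point with largest persisting face tau lies in Gamma_tau: any face
   t persisting from it after localization persists already, so t <= tau. *)
Lemma piece_below_gamma tau : is_face Qp tau -> forall q, loc_supp (piece tau) tau q ->
  exists2 q', qle Qp q q' & gamma_supp Qp (loc_supp (piece tau) tau) tau q'.
Proof.
move=> ftau q [f [tf Pf]]; have [[p Sp le_qfp] Uqf] := Pf 0 (face0 ftau).
rewrite addr0 in le_qfp Uqf; have [Dp sp Pp maxp] := Sp.
have le_qp : qle Qp q p := qle_trans poag (qle_addr q (face_Qp ftau tf)) le_qfp.
have Pp' : piece tau p.
  by split; [exists p => //; exact: qle_refl | exact: image_supp_le Uqf].
exists p => //; split; first exact: sub_loc_supp ftau (fun _ _ => pieceD ftau) _ Pp'.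
move=> t ft tsub [f' [tf' Lf']]; apply: tsub; apply: maxp => // a ta.
have Dpfa : D (p + (f' + a)) by exact: loc_supp_piece_D ftau (Lf' a ta).
apply: (downset_le dD _ Dpfa).
by rewrite (addrC f') addrA; exact: qle_addr (face_Qp ft tf').
Qed.

Lemma piece_map_qhom tau : is_qhom Qp (piece_map tau).
Proof.
split=> [q a x y|q q' le_qq' x]; first by rewrite /piece_map (qhom_lin hphi) mulmxDl scalemxAl.
rewrite /piece_map (qhom_qmap hphi _ le_qq') /=.
have [->|nx] := eqVneq (phi q x) 0; first by rewrite !mul0mx.
rewrite !mulmx_const1A //.
- move=> _ /asboolP [Bq' Uq']; apply/asboolP; split; first exact: (below_stable_le poag le_qq' Bq').
  by exists x; apply/eqP.
- by move=> _ /asboolP /piece_D Dq'; exact/asboolP.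
Qed.

Lemma piece_map_quotient tau :
  is_quotient Qp (fun q x => piece_map tau q x = 0) (piece_map tau).
Proof.
split=> //; first exact/kD_is_qmod/piece_convex.
  exact: piece_map_qhom.
move=> q y; have [Pq|nPq] := pselect (piece tau q); last first.
  by exists 0; rewrite (row_asboolF y nPq) /piece_map (qhom0 hphi) mul0mx.
have [[x nx] Dq] := (Pq.2, piece_D Pq).
have nx' : piece_map tau q x != 0.
  apply/eqP => /mulmx_const1_eq0 x0; apply: nx; apply: x0 => _; exact/asboolP.
have [a ->] := row_bool_multiple y nx'.
by exists (a *: x); rewrite /piece_map (qhomZ hphi) -scalemxAl.
Qed.

Lemma piece_ker_qsub tau : is_qsub Qp (fun q x => piece_map tau q x = 0).
Proof.
have hp := piece_map_qhom tau; split.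
- by move=> q; exact: (qhom0 hp).
- by move=> q a x y x0 y0; rewrite (qhom_lin hp) x0 y0 scaler0 addr0.
- by move=> q q' x le_qq' x0; rewrite (qhom_qmap hp _ le_qq') x0 /= mul0mx.
Qed.

Lemma piece_coprimary tau : is_face Qp tau -> coprimary Qp (kD k (piece tau)).
Proof.
move=> ftau; apply: (@kD_coprimary _ _ _ _ tau) => //.
- exact: piece_convex.
- by move=> q f Pq tf; exact: pieceD.
- exact: piece_below_gamma.
Qed.

Lemma piece_map_separates (s : seq (set Q)) : [set t | is_face Qp t] = [set` s] ->
  forall q x, phi q x <> 0 -> exists2 tau, is_face Qp tau & piece_map tau q x <> 0.
Proof.
move=> faces_s q x nx; have Dq : D q by exact: image_supp_D (ex_intro _ x nx).
have [tau ftau Bq] := below_stable_cover poag dD faces_s Dq.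
have Pq : piece tau q by split => //; exists x.
by exists tau => // /mulmx_const1_eq0 x0; apply: nx; apply: x0 => _; exact/asboolP.
Qed.

End Pieces.
Arguments piece_map {Q} Qp {k M D} phi tau q x.

Theorem theorem5p8 (Q : zmodType) (Qp : set Q) (k : fieldType) (M : qmod Q k) :
  is_poag Qp -> polyhedral Qp -> is_qmod Qp M -> downset_finite Qp M ->
  exists r (Ms : 'I_r -> qsub M),
    [/\ (forall i, is_qsub Qp (Ms i)),
        (forall i, exists (P : qmod Q k) (p : qhom M P),
            is_quotient Qp (Ms i) p /\ coprimary Qp P) &
        (forall q (x : qcar M q), (forall i, Ms i q x) -> x = 0)].
Proof.
move=> poag poly _ [n [D [phi [dD hphi hull]]]].
have [s faces_s] := (finite_seqP _).1 poly.
have face_nth (i : 'I_(size s)) : is_face Qp (nth set0 s i).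
  have : [set` s] (nth set0 s i) by rewrite /= mem_nth.
  by rewrite -faces_s.
pose Ms (i : 'I_#|{: 'I_n * 'I_(size s)}|) : qsub M := fun q x =>
  piece_map Qp (phi (enum_val i).1) (nth set0 s (enum_val i).2) q x = 0.
exists #|{: 'I_n * 'I_(size s)}|, Ms; split.
- by move=> i; exact: (piece_ker_qsub poag (dD _) (hphi _)).
- move=> i; exists (kD k (piece Qp (phi (enum_val i).1) (nth set0 s (enum_val i).2))).
  exists (piece_map Qp (phi (enum_val i).1) (nth set0 s (enum_val i).2)).
  split; first exact: (piece_map_quotient poag (dD _) (hphi _)).
  exact/(piece_coprimary poag (dD _) (hphi _))/face_nth.
move=> q x Ms0; apply: hull => j; apply: contrapT => nx.
have [tau ftau ntau] := piece_map_separates poag (dD j) faces_s nx.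
have s_tau : tau \in s by have : [set` s] tau by rewrite -faces_s.
apply: ntau; have := Ms0 (enum_rank (j, Ordinal (etrans (index_mem tau s) s_tau))).
by rewrite /Ms enum_rankK /= nth_index.
Qed.
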